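(* Let $K>0$ and $V(x)=Ke^{2ix}$. Then for every $x\in(0,\pi)$, every $j\in\mathbb{N}$, $k\in\mathbb{N}_0$ and $m\in\mathbb{N}_0$, we have $\mu_j(x)\ne E_m$ and $\nu_k(x)\ne E_m$.
   Context: For $x_0\in\mathbb{R}$, let $c(\lambda,x_0,\cdot)$, $s(\lambda,x_0,\cdot)$ be the solutions of $-\psi''(x)+Ke^{2ix}\psi(x)=\lambda\psi(x)$ with $c(\lambda,x_0,x_0)=1$, $c'(\lambda,x_0,x_0)=0$, $s(\lambda,x_0,x_0)=0$, $s'(\lambda,x_0,x_0)=1$. The Dirichlet eigenvalues $\mu_j(x_0)$, $j\in\mathbb{N}$, are the zeros of $\lambda\mapsto s(\lambda,x_0,x_0+\pi)$ and the Neumann eigenvalues $\nu_k(x_0)$, $k\in\mathbb{N}_0$, are the zeros of $\lambda\mapsto c'(\lambda,x_0,x_0+\pi)$, each listed with multiplicity in order of non-decreasing modulus. The numbers $E_m$, $m\in\mathbb{N}_0$, are the zeros of $\Delta(\lambda)^2-1$ with $\Delta$ the Floquet discriminant; for this potential $\Delta(\lambda)=\cos(\pi\sqrt\lambda)$, so $E_0=0$ and $E_{2m-1}=E_{2m}=m^2$, $m\in\mathbb{N}$. *)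

From Stdlib Require Import Reals.
From Coquelicot Require Import Coquelicot.
Open Scope R_scope.

Definition cexpi (t : R) : C := (cos t, sin t).

Definition V (K : R) (x : R) : C := (RtoC K * cexpi (2 * x))%C.

Definition is_solution (K : R) (lam : C) (psi d1 d2 : R -> C) : Prop :=
  (forall x, is_derive psi x (d1 x)) /\
  (forall x, is_derive d1 x (d2 x)) /\
  (forall x, (- d2 x + V K x * psi x)%C = (lam * psi x)%C).

Definition is_s_solution (K : R) (lam : C) (x0 : R) (psi d1 d2 : R -> C) : Prop :=
  is_solution K lam psi d1 d2 /\ psi x0 = 0%C /\ d1 x0 = 1%C.

Definition is_c_solution (K : R) (lam : C) (x0 : R) (psi d1 d2 : R -> C) : Prop :=
  is_solution K lam psi d1 d2 /\ psi x0 = 1%C /\ d1 x0 = 0%C.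

Definition dirichlet_eigenvalue (K : R) (x0 : R) (lam : C) : Prop :=
  exists psi d1 d2, is_s_solution K lam x0 psi d1 d2 /\ psi (x0 + PI) = 0%C.

Definition neumann_eigenvalue (K : R) (x0 : R) (lam : C) : Prop :=
  exists psi d1 d2, is_c_solution K lam x0 psi d1 d2 /\ d1 (x0 + PI) = 0%C.

(* E_m, m in N_0: zeros of Delta^2 - 1 with Delta(lam) = cos(pi sqrt lam):
   E_0 = 0, E_{2m-1} = E_{2m} = m^2.  Indexed by m : nat. *)
Definition E (m : nat) : C := RtoC (INR ((S m) / 2) ^ 2).

From Stdlib Require Import Reals Lra Lia Factorial.
From Coquelicot Require Import Coquelicot.
Open Scope R_scope.

(* For lambda = n^2 the equation has the Floquet solution
     phi(x) = sum_k c_k e^{i(2k+n)x},  c_k = (-1)^k (K/4)^k / (k! (k+n)!),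
   with phi(x + pi) = (-1)^n phi(x); its truncations phi_N solve the equation up to the
   residual K c_N e^{i(2N+2+n)x}.  If psi is a Dirichlet (Neumann) eigenfunction at x0, the
   Wronskian W(phi_N, psi)(x0) is phi_N(x0) (resp. -phi_N'(x0)) and gets multiplied by a fixed
   beta over one period.  For beta <> 1 the mean value theorem bounds it by O(c_N); for beta = 1,
   psi is itself (-1)^n-periodic and the same bound comes from the Wronskian of x phi_N with psi,
   corrected by a primitive of psi phi_N' built from Wronskians of psi with exponentials.
   Neither phi_N(x0) nor phi_N'(x0) can be O(c_N): at x0 = pi/2 all their terms have the same
   phase, and otherwise, with f(s) = sum_k c_k e^{i(2k+n)x0} s^(2k) (a Bessel series in the
   non-real variable K e^{2 i x0}), Lommel's argument shows that
   Im(V(x0)) Im(s^(2n+1) f'(s) conj f(s)) decreases by a fixed amount on [0, 1] up to O(c_N),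
   while at s = 1 it would be O(c_N). *)

Ltac ring_C_parts :=
  apply injective_projections;
  unfold Cminus, Cplus, Cmult, Copp, Cconj, RtoC, cexpi, Ci; cbn [fst snd]; ring.

Lemma is_derive_C_iff (f : R -> C) (x : R) (l : C) :
  is_derive f x l <->
  is_derive (fun t => fst (f t)) x (fst l) /\ is_derive (fun t => snd (f t)) x (snd l).
Proof.
  unfold is_derive; split.
  - intros Hf; split.
    + exact (filterdiff_comp' f fst x _ _ Hf
        (filterdiff_linear _ (is_linear_fst (U:=R_NormedModule) (V:=R_NormedModule)))).
    + exact (filterdiff_comp' f snd x _ _ Hf
        (filterdiff_linear _ (is_linear_snd (U:=R_NormedModule) (V:=R_NormedModule)))).
  - intros [H1 H2].
    pose proof (filterdiff_comp'_2 (K:=R_AbsRing) (U:=R_NormedModule) (V:=R_NormedModule)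
      (W:=C_R_NormedModule) (fun t => fst (f t)) (fun t => snd (f t))
      (fun a b => (a, b) : C) x _ _ (fun a b => (a, b) : C) H1 H2) as Hpair.
    eapply filterdiff_ext_lin.
    + eapply filterdiff_ext; [|apply Hpair].
      * intros t; simpl; destruct (f t); reflexivity.
      * apply (filterdiff_linear (K:=R_AbsRing)
          (U:=prod_NormedModule R_AbsRing R_NormedModule R_NormedModule) (V:=C_R_NormedModule)
          (fun t => (fst t, snd t) : C)).
        apply is_linear_prod; [apply is_linear_fst | apply is_linear_snd].
    + intros y; simpl; destruct l; reflexivity.
Qed.

Lemma is_derive_C_ext_value (f : R -> C) (x : R) (l l' : C) :
  l = l' -> is_derive f x l -> is_derive f x l'.
Proof. now intros ->. Qed.

Lemma is_derive_Cplus (f g : R -> C) (x : R) (a b : C) :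
  is_derive f x a -> is_derive g x b -> is_derive (fun t => f t + g t)%C x (a + b)%C.
Proof. exact (is_derive_plus (K:=R_AbsRing) (V:=C_R_NormedModule) f g x a b). Qed.

Lemma is_derive_Cminus (f g : R -> C) (x : R) (a b : C) :
  is_derive f x a -> is_derive g x b -> is_derive (fun t => f t - g t)%C x (a - b)%C.
Proof. exact (is_derive_minus (K:=R_AbsRing) (V:=C_R_NormedModule) f g x a b). Qed.

Lemma is_derive_Cconst (c : C) (x : R) : is_derive (fun _ : R => c) x (RtoC 0).
Proof. exact (is_derive_const (K:=R_AbsRing) (V:=C_R_NormedModule) c x). Qed.

Lemma is_derive_Cmult (f g : R -> C) (x : R) (a b : C) :
  is_derive f x a -> is_derive g x b -> is_derive (fun t => f t * g t)%C x (a * g x + f x * b)%C.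
Proof.
  rewrite !is_derive_C_iff; intros [Ha1 Ha2] [Hb1 Hb2].
  pose proof (is_derive_mult _ _ x _ _ Ha1 Hb1 Rmult_comm) as H11.
  pose proof (is_derive_mult _ _ x _ _ Ha2 Hb2 Rmult_comm) as H22.
  pose proof (is_derive_mult _ _ x _ _ Ha1 Hb2 Rmult_comm) as H12.
  pose proof (is_derive_mult _ _ x _ _ Ha2 Hb1 Rmult_comm) as H21.
  split.
  - replace (fst (a * g x + f x * b)%C)
      with (fst a * fst (g x) + fst (f x) * fst b - (snd a * snd (g x) + snd (f x) * snd b))
      by (simpl; ring).
    exact (is_derive_minus _ _ x _ _ H11 H22).
  - replace (snd (a * g x + f x * b)%C)
      with (fst a * snd (g x) + fst (f x) * snd b + (snd a * fst (g x) + snd (f x) * fst b))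
      by (simpl; ring).
    exact (is_derive_plus _ _ x _ _ H12 H21).
Qed.

Lemma is_derive_Cscal (c : C) (f : R -> C) (x : R) (a : C) :
  is_derive f x a -> is_derive (fun t => c * f t)%C x (c * a)%C.
Proof.
  intros H; eapply is_derive_C_ext_value;
    [|exact (is_derive_Cmult _ _ x _ _ (is_derive_Cconst c x) H)].
  cbv beta; ring.
Qed.

Lemma is_derive_RtoC (f : R -> R) (x a : R) :
  is_derive f x a -> is_derive (fun t => RtoC (f t)) x (RtoC a).
Proof.
  intros H; apply is_derive_C_iff; simpl; split; [exact H|].
  apply (is_derive_const (K:=R_AbsRing) (V:=R_NormedModule)).
Qed.

Lemma is_derive_Cconj (f : R -> C) (x : R) (a : C) :
  is_derive f x a -> is_derive (fun t => Cconj (f t)) x (Cconj a).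
Proof.
  rewrite !is_derive_C_iff; intros [H1 H2]; split; [exact H1|].
  exact (is_derive_opp (K:=R_AbsRing) (V:=R_NormedModule) _ _ _ H2).
Qed.

Lemma is_derive_cexpi (p x : R) :
  is_derive (fun t => cexpi (p * t)) x (Ci * RtoC p * cexpi (p * x))%C.
Proof.
  apply is_derive_C_iff; unfold cexpi; simpl; split; auto_derive; auto; ring.
Qed.

Lemma is_derive_sum_n_C (F F' : nat -> R -> C) (N : nat) (x : R) :
  (forall k, is_derive (F k) x (F' k x)) ->
  is_derive (fun t => sum_n (fun k => F k t) N) x (sum_n (fun k => F' k x) N).
Proof.
  intros H; exact (is_derive_sum_n (K:=R_AbsRing) (V:=C_R_NormedModule) F N x _ (fun k _ => H k)).
Qed.

Lemma cexpi_add (a b : R) : cexpi (a + b) = (cexpi a * cexpi b)%C.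
Proof. unfold cexpi, Cmult; simpl; rewrite cos_plus, sin_plus; f_equal; ring. Qed.

Lemma cexpi_opp (a : R) : cexpi (- a) = Cconj (cexpi a).
Proof. unfold cexpi, Cconj; simpl; rewrite cos_neg, sin_neg; reflexivity. Qed.

Lemma Cmod_cexpi (a : R) : Cmod (cexpi a) = 1.
Proof.
  unfold Cmod, cexpi; simpl.
  replace (cos a * (cos a * 1) + sin a * (sin a * 1)) with 1
    by (pose proof (sin2_cos2 a); unfold Rsqr in *; lra).
  apply sqrt_1.
Qed.

Lemma cexpi_INR_mul (j : nat) (t : R) : cexpi (INR j * t) = Cpow (cexpi t) j.
Proof.
  induction j as [|j IH]; simpl Cpow.
  - rewrite Rmult_0_l; unfold cexpi; rewrite cos_0, sin_0; reflexivity.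
  - rewrite S_INR, Rmult_plus_distr_r, Rmult_1_l, Rplus_comm, cexpi_add, IH; reflexivity.
Qed.

Lemma cexpi_INR_PI (j : nat) : cexpi (INR j * PI) = RtoC ((-1) ^ j).
Proof.
  rewrite cexpi_INR_mul, RtoC_pow; f_equal.
  unfold cexpi; rewrite cos_PI, sin_PI; reflexivity.
Qed.

Lemma im_le_Cmod (c : C) : Rabs (Im c) <= Cmod c.
Proof. eapply Rle_trans; [apply Rmax_r | apply Rmax_Cmod]. Qed.

Lemma Cmod_le_Rabs_parts (z : C) : Cmod z <= Rabs (fst z) + Rabs (snd z).
Proof.
  replace z with (RtoC (fst z) + Ci * RtoC (snd z))%C at 1 by (destruct z; ring_C_parts).
  eapply Rle_trans; [apply Cmod_triangle|].
  rewrite Cmod_mult, Cmod_Ci, !Cmod_R; lra.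
Qed.

Lemma MVT_upper_bound (f f' : R -> R) (a b M : R) :
  a <= b -> (forall x, is_derive f x (f' x)) -> (forall x, a <= x <= b -> f' x <= M) ->
  f b - f a <= M * (b - a).
Proof.
  intros Hab Hd HM.
  destruct (MVT_gen f a b f') as [c [Hc ->]].
  - intros; apply Hd.
  - intros y _; apply continuity_pt_filterlim.
    apply (ex_derive_continuous (K:=R_AbsRing) (V:=R_NormedModule)).
    eexists; apply Hd.
  - rewrite Rmin_left, Rmax_right in Hc by lra.
    apply Rmult_le_compat_r; [lra | apply HM; lra].
Qed.

Lemma Rabs_MVT_bound (f f' : R -> R) (a b M : R) :
  a <= b -> (forall x, is_derive f x (f' x)) -> (forall x, a <= x <= b -> Rabs (f' x) <= M) ->
  Rabs (f b - f a) <= M * (b - a).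
Proof.
  intros Hab Hd HM; apply Rabs_le; split.
  - assert (Hneg : - f b - - f a <= M * (b - a)).
    { apply (MVT_upper_bound (fun t => - f t) (fun t => - f' t)); auto.
      - intros x; exact (is_derive_opp _ _ _ (Hd x)).
      - intros x Hx; eapply Rle_trans; [|apply HM, Hx].
        rewrite <- Rabs_Ropp; apply Rle_abs. }
    lra.
  - apply (MVT_upper_bound f f'); auto.
    intros x Hx; exact (Rle_trans _ _ _ (Rle_abs _) (HM x Hx)).
Qed.

Lemma Cmod_MVT_bound (F F' : R -> C) (a b M : R) :
  a <= b -> (forall x, is_derive F x (F' x)) -> (forall x, a <= x <= b -> Cmod (F' x) <= M) ->
  Cmod (F b - F a)%C <= 2 * (M * (b - a)).
Proof.
  intros Hab Hd HM.
  assert (Hfst : Rabs (fst (F b) - fst (F a)) <= M * (b - a)).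
  { apply (Rabs_MVT_bound (fun t => fst (F t)) (fun t => fst (F' t))); auto.
    - intros x; exact (proj1 (proj1 (is_derive_C_iff _ _ _) (Hd x))).
    - intros x Hx; eapply Rle_trans; [apply re_le_Cmod | apply (HM x Hx)]. }
  assert (Hsnd : Rabs (snd (F b) - snd (F a)) <= M * (b - a)).
  { apply (Rabs_MVT_bound (fun t => snd (F t)) (fun t => snd (F' t))); auto.
    - intros x; exact (proj2 (proj1 (is_derive_C_iff _ _ _) (Hd x))).
    - intros x Hx; eapply Rle_trans; [apply im_le_Cmod | apply (HM x Hx)]. }
  eapply Rle_trans; [apply Cmod_le_Rabs_parts|].
  replace (fst (F b - F a)%C) with (fst (F b) - fst (F a)) by (simpl; ring).
  replace (snd (F b - F a)%C) with (snd (F b) - snd (F a)) by (simpl; ring).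
  lra.
Qed.

Lemma Cmod_bounded_of_derive (f f' : R -> C) (a b : R) :
  (forall x, is_derive f x (f' x)) -> exists M, forall x, a <= x <= b -> Cmod (f x) <= M.
Proof.
  intros Hd.
  destruct (bounded_continuity (K:=R_AbsRing) f a b) as [M HM].
  - intros x _; apply ex_derive_continuous; eexists; apply Hd.
  - exists M; intros x Hx; rewrite Cmod_norm; left; auto.
Qed.

Lemma sum_Sn_C (a : nat -> C) (N : nat) : sum_n a (S N) = (sum_n a N + a (S N))%C.
Proof. exact (sum_Sn (G:=C_AbelianMonoid) a N). Qed.

Lemma sum_n_ext_C (a b : nat -> C) (N : nat) :
  (forall k, (k <= N)%nat -> a k = b k) -> sum_n a N = sum_n b N.
Proof. exact (sum_n_ext_loc a b N). Qed.

Lemma sum_Sn_R (g : nat -> R) (N : nat) : sum_n g (S N) = sum_n g N + g (S N).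
Proof. exact (sum_Sn (G:=R_AbelianMonoid) g N). Qed.

Lemma sum_n_mult_l_C (c : C) (a : nat -> C) (N : nat) :
  sum_n (fun k => c * a k)%C N = (c * sum_n a N)%C.
Proof. exact (sum_n_mult_l (K:=C_Ring) c a N). Qed.

Lemma sum_n_plus_C (a b : nat -> C) (N : nat) :
  sum_n (fun k => a k + b k)%C N = (sum_n a N + sum_n b N)%C.
Proof. exact (sum_n_plus (G:=C_AbelianMonoid) a b N). Qed.

Lemma sum_n_mult_l_R (c : R) (a : nat -> R) (N : nat) :
  sum_n (fun k => c * a k) N = c * sum_n a N.
Proof. exact (sum_n_mult_l (K:=R_Ring) c a N). Qed.

Lemma sum_n_RtoC (g : nat -> R) (N : nat) :
  sum_n (fun k => RtoC (g k)) N = RtoC (sum_n g N).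
Proof.
  induction N as [|N IH]; [rewrite !sum_O; reflexivity|].
  rewrite sum_Sn_C, sum_Sn_R, IH; ring_C_parts.
Qed.

Lemma Cmod_sum_n (a : nat -> C) (N : nat) : Cmod (sum_n a N) <= sum_n (fun k => Cmod (a k)) N.
Proof.
  rewrite Cmod_norm, (sum_n_ext _ (fun k => @norm R_AbsRing C_R_NormedModule (a k)))
    by (intros; apply Cmod_norm).
  apply (norm_sum_n_m (K:=R_AbsRing) (V:=C_R_NormedModule)).
Qed.

Lemma sum_n_shift_R (a : nat -> R) (N : nat) :
  sum_n a (S N) = a O + sum_n (fun k => a (S k)) N.
Proof. unfold sum_n; rewrite sum_Sn_m, sum_n_m_S by lia; reflexivity. Qed.

Lemma sum_n_shift_C (a : nat -> C) (N : nat) :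
  sum_n a (S N) = (a O + sum_n (fun k => a (S k)) N)%C.
Proof. unfold sum_n; rewrite sum_Sn_m, sum_n_m_S by lia; reflexivity. Qed.

Lemma sum_n_ge_first (a : nat -> R) (N : nat) : (forall k, 0 <= a k) -> a O <= sum_n a N.
Proof.
  intros Ha; induction N as [|N IH]; [rewrite sum_O; lra|].
  rewrite sum_Sn_R; specialize (Ha (S N)); lra.
Qed.

Definition lam (n : nat) : C := RtoC (INR n ^ 2).

Definition bessel_coef (K : R) (n k : nat) : R :=
  (K / 4) ^ k / (INR (fact k) * INR (fact (k + n))).

Definition floquet_coef (K : R) (n k : nat) : R := (-1) ^ k * bessel_coef K n k.

Definition freq (n k : nat) : R := INR (2 * k + n).

Definition floquet_trunc (K : R) (n N : nat) (x : R) : C :=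
  sum_n (fun k => RtoC (floquet_coef K n k) * cexpi (freq n k * x))%C N.

Definition floquet_trunc1 (K : R) (n N : nat) (x : R) : C :=
  sum_n (fun k => RtoC (floquet_coef K n k) * (Ci * RtoC (freq n k)) * cexpi (freq n k * x))%C N.

Definition floquet_trunc2 (K : R) (n N : nat) (x : R) : C :=
  sum_n (fun k => RtoC (floquet_coef K n k) * RtoC (- freq n k ^ 2) * cexpi (freq n k * x))%C N.

Lemma bessel_coef_pos (K : R) (n k : nat) : 0 < K -> 0 < bessel_coef K n k.
Proof.
  intros HK; apply Rdiv_lt_0_compat; [apply pow_lt; lra|].
  apply Rmult_lt_0_compat; apply INR_fact_lt_0.
Qed.

Lemma Rabs_floquet_coef (K : R) (n k : nat) :
  0 < K -> Rabs (floquet_coef K n k) = bessel_coef K n k.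
Proof.
  intros HK; unfold floquet_coef.
  rewrite Rabs_mult, pow_1_abs, Rabs_right; [ring | left; apply bessel_coef_pos; auto].
Qed.

Lemma floquet_coef_rec (K : R) (n k : nat) :
  floquet_coef K n (S k) * (4 * INR (S k) * INR (S k + n)) = - K * floquet_coef K n k.
Proof.
  unfold floquet_coef, bessel_coef; replace (S k + n)%nat with (S (k + n)) by lia.
  rewrite !fact_simpl, !mult_INR.
  pose proof (INR_fact_lt_0 k); pose proof (INR_fact_lt_0 (k + n)).
  assert (INR (S k) <> 0) by (apply not_0_INR; lia).
  assert (INR (S (k + n)) <> 0) by (apply not_0_INR; lia).
  simpl pow; field; repeat split; lra.
Qed.

Lemma freq_S_sq (n k : nat) : freq n (S k) ^ 2 - INR n ^ 2 = 4 * INR (S k) * INR (S k + n).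
Proof. unfold freq; rewrite !plus_INR, !mult_INR, !S_INR; simpl; ring. Qed.

Lemma cexpi_freq_S (n k : nat) (x : R) :
  cexpi (freq n (S k) * x) = (cexpi (freq n k * x) * cexpi (2 * x))%C.
Proof.
  rewrite <- cexpi_add; f_equal; unfold freq.
  replace (2 * S k + n)%nat with (S (S (2 * k + n))) by lia; rewrite !S_INR; ring.
Qed.

Lemma floquet_trunc_residual (K : R) (n N : nat) (x : R) :
  (floquet_trunc K n N x * (V K x - lam n) - floquet_trunc2 K n N x)%C
  = (RtoC (K * floquet_coef K n N) * cexpi (freq n (S N) * x))%C.
Proof.
  unfold floquet_trunc, floquet_trunc2, V, lam; induction N as [|N IH].
  - rewrite !sum_O, cexpi_freq_S; unfold freq, floquet_coef, bessel_coef; simpl.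
    generalize (cexpi (INR n * x)); intros; ring_C_parts.
  - rewrite !sum_Sn_C.
    set (S1 := sum_n (fun k => RtoC (floquet_coef K n k) * cexpi (freq n k * x))%C N) in *.
    set (S2 := sum_n (fun k => RtoC (floquet_coef K n k) * RtoC (- freq n k ^ 2)
                                * cexpi (freq n k * x))%C N) in *.
    transitivity ((S1 * (RtoC K * cexpi (2 * x) - RtoC (INR n ^ 2)) - S2)
       + RtoC (floquet_coef K n (S N)) * cexpi (freq n (S N) * x)
         * (RtoC K * cexpi (2 * x) - RtoC (INR n ^ 2))
       + RtoC (floquet_coef K n (S N) * freq n (S N) ^ 2) * cexpi (freq n (S N) * x))%C.
    { generalize (cexpi (2 * x)) (cexpi (freq n (S N) * x)); intros; ring_C_parts. }
    rewrite IH, (cexpi_freq_S n (S N)).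
    replace (freq n (S N) ^ 2) with (INR n ^ 2 + 4 * INR (S N) * INR (S N + n))
      by (rewrite <- freq_S_sq; ring).
    rewrite Rmult_plus_distr_l, floquet_coef_rec.
    generalize (cexpi (freq n (S N) * x)) (cexpi (2 * x)); intros; ring_C_parts.
Qed.

Lemma is_derive_floquet_trunc (K : R) (n N : nat) (x : R) :
  is_derive (floquet_trunc K n N) x (floquet_trunc1 K n N x).
Proof.
  apply (is_derive_sum_n_C (fun k t => RtoC (floquet_coef K n k) * cexpi (freq n k * t))%C
    (fun k t => RtoC (floquet_coef K n k) * (Ci * RtoC (freq n k)) * cexpi (freq n k * t))%C).
  intros k; eapply is_derive_C_ext_value; [|apply is_derive_Cscal, is_derive_cexpi]; ring.
Qed.

Lemma is_derive_floquet_trunc1 (K : R) (n N : nat) (x : R) :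
  is_derive (floquet_trunc1 K n N) x (floquet_trunc2 K n N x).
Proof.
  apply (is_derive_sum_n_C
    (fun k t => RtoC (floquet_coef K n k) * (Ci * RtoC (freq n k)) * cexpi (freq n k * t))%C
    (fun k t => RtoC (floquet_coef K n k) * RtoC (- freq n k ^ 2) * cexpi (freq n k * t))%C).
  intros k; eapply is_derive_C_ext_value; [|apply is_derive_Cscal, is_derive_cexpi].
  generalize (cexpi (freq n k * x)); intros; ring_C_parts.
Qed.

Lemma pow_m1_even (k : nat) : (-1) ^ (2 * k) = 1.
Proof. rewrite pow_mult; replace ((-1) ^ 2) with 1 by ring; apply pow1. Qed.

Lemma sign_sq (n : nat) : (-1) ^ n * (-1) ^ n = 1.
Proof. rewrite <- Rpow_mult_distr; replace (-1 * -1) with 1 by ring; apply pow1. Qed.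

Definition floquet_sign (n : nat) : C := RtoC ((-1) ^ n).

Lemma floquet_sign_sq (n : nat) : (floquet_sign n * floquet_sign n)%C = RtoC 1.
Proof. unfold floquet_sign; rewrite <- RtoC_mult, sign_sq; reflexivity. Qed.

Lemma cexpi_freq_shift_PI (n k : nat) (x : R) :
  cexpi (freq n k * (x + PI)) = (floquet_sign n * cexpi (freq n k * x))%C.
Proof.
  rewrite Rmult_plus_distr_l, cexpi_add; unfold floquet_sign, freq at 2.
  rewrite cexpi_INR_PI, pow_add, pow_m1_even, Rmult_1_l; ring.
Qed.

Lemma floquet_trunc_shift_PI (K : R) (n N : nat) (x : R) :
  floquet_trunc K n N (x + PI) = (floquet_sign n * floquet_trunc K n N x)%C.
Proof.
  unfold floquet_trunc; rewrite <- sum_n_mult_l_C; apply sum_n_ext_C; intros k _.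
  rewrite cexpi_freq_shift_PI; ring.
Qed.

Lemma floquet_trunc1_shift_PI (K : R) (n N : nat) (x : R) :
  floquet_trunc1 K n N (x + PI) = (floquet_sign n * floquet_trunc1 K n N x)%C.
Proof.
  unfold floquet_trunc1; rewrite <- sum_n_mult_l_C; apply sum_n_ext_C; intros k _.
  rewrite cexpi_freq_shift_PI; ring.
Qed.

Definition wronskian (f f' g g' : R -> C) (x : R) : C := (f x * g' x - f' x * g x)%C.

Definition mode_freq (n j : nat) : R := 2 * INR j - INR n.

Lemma mode_freq_S (n j : nat) : mode_freq n (S j) = mode_freq n j + 2.
Proof. unfold mode_freq; rewrite S_INR; ring. Qed.

Lemma mode_freq_add (n k : nat) : mode_freq n (k + n) = freq n k.
Proof. unfold mode_freq, freq; rewrite !plus_INR, mult_INR; simpl; ring. Qed.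

Lemma cexpi_mode_freq_shift_PI (n j : nat) (x : R) :
  cexpi (mode_freq n j * (x + PI)) = (floquet_sign n * cexpi (mode_freq n j * x))%C.
Proof.
  rewrite Rmult_plus_distr_l, cexpi_add; unfold floquet_sign.
  replace (mode_freq n j * PI) with (INR (2 * j) * PI + - (INR n * PI))
    by (unfold mode_freq; rewrite mult_INR; simpl; ring).
  rewrite cexpi_add, cexpi_opp, !cexpi_INR_PI, pow_m1_even.
  generalize (cexpi (mode_freq n j * x)); intros.
  pose proof (sign_sq n); apply injective_projections; simpl; nra.
Qed.

Section Wronskian.

Variables (K : R) (n : nat) (psi psi' psi'' : R -> C).
Hypothesis HK : 0 < K.
Hypothesis Hsol : is_solution K (lam n) psi psi' psi''.

Lemma is_derive_wronskian_solution (q q' q'' : R -> C) (x : R) :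
  (forall t, is_derive q t (q' t)) -> (forall t, is_derive q' t (q'' t)) ->
  is_derive (wronskian q q' psi psi') x (psi x * (q x * (V K x - lam n) - q'' x))%C.
Proof.
  intros Hq Hq'; destruct Hsol as [H1 [H2 Hode]].
  eapply is_derive_C_ext_value;
    [|apply is_derive_Cminus; apply is_derive_Cmult; auto].
  replace (psi'' x) with (V K x * psi x - lam n * psi x)%C
    by (rewrite <- (Hode x); ring).
  ring.
Qed.

Definition wave_wronskian (j : nat) : R -> C :=
  wronskian (fun t => cexpi (mode_freq n j * t))
            (fun t => Ci * RtoC (mode_freq n j) * cexpi (mode_freq n j * t))%C psi psi'.

Lemma is_derive_wave_wronskian (j : nat) (x : R) :
  is_derive (wave_wronskian j) x
    (psi x * (RtoC K * cexpi (mode_freq n (S j) * x)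
              + RtoC (mode_freq n j ^ 2 - INR n ^ 2) * cexpi (mode_freq n j * x)))%C.
Proof.
  eapply is_derive_C_ext_value; [|apply (is_derive_wronskian_solution _ _
    (fun t => Ci * RtoC (mode_freq n j)
              * (Ci * RtoC (mode_freq n j) * cexpi (mode_freq n j * t)))%C)];
    [| intros; apply is_derive_cexpi | intros; apply is_derive_Cscal, is_derive_cexpi].
  rewrite mode_freq_S, Rmult_plus_distr_r, cexpi_add; unfold V, lam.
  generalize (cexpi (mode_freq n j * x)) (psi x); intros; ring_C_parts.
Qed.

(* For j >= 1 a primitive of [psi * e^{i a_j x}], a_j = 2j - n, obtained by solving the
   derivative formula of [wave_wronskian] for the top exponential; it can start from
   j = 0 because a_0^2 = n^2. *)
Fixpoint wave_primitive (j : nat) (x : R) : C :=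
  match j with
  | O => RtoC 0
  | S j' => (RtoC (/ K) * (wave_wronskian j' x
                            - RtoC (mode_freq n j' ^ 2 - INR n ^ 2) * wave_primitive j' x))%C
  end.

Lemma is_derive_wave_primitive_step (j : nat) (x : R) (D : C) :
  is_derive (wave_primitive j) x D ->
  (RtoC (mode_freq n j ^ 2 - INR n ^ 2) * D
   = RtoC (mode_freq n j ^ 2 - INR n ^ 2) * (psi x * cexpi (mode_freq n j * x)))%C ->
  is_derive (wave_primitive (S j)) x (psi x * cexpi (mode_freq n (S j) * x))%C.
Proof.
  intros HD HDeq.
  eapply is_derive_C_ext_value;
    [|apply is_derive_Cscal, is_derive_Cminus; [apply is_derive_wave_wronskian|];
      apply is_derive_Cscal; exact HD].
  rewrite HDeq.
  generalize (psi x) (cexpi (mode_freq n (S j) * x)) (cexpi (mode_freq n j * x)); intros.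
  apply injective_projections; unfold Cminus, Cplus, Cmult, Copp, RtoC; cbn [fst snd];
    field; lra.
Qed.

Lemma is_derive_wave_primitive (j : nat) (x : R) :
  is_derive (wave_primitive (S j)) x (psi x * cexpi (mode_freq n (S j) * x))%C.
Proof.
  induction j as [|j IH].
  - apply (is_derive_wave_primitive_step 0 x (RtoC 0)); [apply is_derive_Cconst|].
    replace (mode_freq n 0 ^ 2 - INR n ^ 2) with 0 by (unfold mode_freq; simpl; ring).
    generalize (psi x * cexpi (mode_freq n 0 * x))%C; intros; ring_C_parts.
  - exact (is_derive_wave_primitive_step (S j) x _ IH eq_refl).
Qed.

Definition trunc_primitive (N : nat) (x : R) : C :=
  sum_n (fun k => RtoC (floquet_coef K n k) * (Ci * RtoC (freq n k))
                  * wave_primitive (k + n) x)%C N.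

Lemma is_derive_trunc_primitive (N : nat) (x : R) :
  is_derive (trunc_primitive N) x (psi x * floquet_trunc1 K n N x)%C.
Proof.
  eapply is_derive_C_ext_value; [|apply (is_derive_sum_n_C
    (fun k t => RtoC (floquet_coef K n k) * (Ci * RtoC (freq n k)) * wave_primitive (k + n) t)%C
    (fun k t => RtoC (floquet_coef K n k) * (Ci * RtoC (freq n k))
                * (psi t * cexpi (freq n k * t)))%C)].
  - unfold floquet_trunc1; rewrite <- sum_n_mult_l_C; apply sum_n_ext_C; intros k _; ring.
  - intros k; destruct (k + n)%nat as [|j] eqn:Ekn.
    + assert (k = 0%nat /\ n = 0%nat) as [-> ->] by lia.
      replace (freq 0 0) with 0 by (unfold freq; simpl; ring).
      eapply is_derive_C_ext_value; [|apply is_derive_Cscal, is_derive_Cconst]; ring.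
    + apply is_derive_Cscal; rewrite <- mode_freq_add, Ekn; apply is_derive_wave_primitive.
Qed.

Definition trunc_wronskian (N : nat) : R -> C :=
  wronskian (floquet_trunc K n N) (floquet_trunc1 K n N) psi psi'.

Lemma is_derive_trunc_wronskian (N : nat) (x : R) :
  is_derive (trunc_wronskian N) x
    (psi x * (RtoC (K * floquet_coef K n N) * cexpi (freq n (S N) * x)))%C.
Proof.
  eapply is_derive_C_ext_value; [|apply (is_derive_wronskian_solution _ _ (floquet_trunc2 K n N));
    intros; [apply is_derive_floquet_trunc | apply is_derive_floquet_trunc1]].
  rewrite floquet_trunc_residual; reflexivity.
Qed.

Definition secular_wronskian (N : nat) : R -> C :=
  wronskian (fun t => RtoC t * floquet_trunc K n N t)%C
            (fun t => floquet_trunc K n N t + RtoC t * floquet_trunc1 K n N t)%C psi psi'.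

(* The derivative of [secular_wronskian] is x psi (residual) - 2 psi phi_N'; twice
   [trunc_primitive] cancels the second term. *)
Definition secular_invariant (N : nat) (x : R) : C :=
  (secular_wronskian N x + RtoC 2 * trunc_primitive N x)%C.

Lemma is_derive_secular_invariant (N : nat) (x : R) :
  is_derive (secular_invariant N) x
    (psi x * (RtoC x * (RtoC (K * floquet_coef K n N) * cexpi (freq n (S N) * x))))%C.
Proof.
  assert (Hid : forall t, is_derive (fun u : R => RtoC u) t (RtoC 1))
    by (intros; apply is_derive_RtoC, (is_derive_id (K:=R_AbsRing))).
  eapply is_derive_C_ext_value; [|apply is_derive_Cplus;
    [apply (is_derive_wronskian_solution _ _
       (fun t => RtoC 2 * floquet_trunc1 K n N t + RtoC t * floquet_trunc2 K n N t)%C)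
    | apply is_derive_Cscal, is_derive_trunc_primitive]].
  - rewrite <- floquet_trunc_residual.
    generalize (floquet_trunc K n N x) (floquet_trunc1 K n N x) (floquet_trunc2 K n N x) (psi x).
    intros; ring_C_parts.
  - intros t; eapply is_derive_C_ext_value;
      [|apply is_derive_Cmult; [apply Hid | apply is_derive_floquet_trunc]]; ring.
  - intros t; eapply is_derive_C_ext_value; [|apply is_derive_Cplus;
      [apply is_derive_floquet_trunc
      | apply is_derive_Cmult; [apply Hid | apply is_derive_floquet_trunc1]]].
    generalize (floquet_trunc1 K n N t); intros; ring_C_parts.
Qed.

Section Period.

Variable x0 : R.

Hypothesis Hpsi_period : psi (x0 + PI) = (floquet_sign n * psi x0)%C.
Hypothesis Hpsi'_period : psi' (x0 + PI) = (floquet_sign n * psi' x0)%C.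

Lemma wave_wronskian_shift_PI (j : nat) : wave_wronskian j (x0 + PI) = wave_wronskian j x0.
Proof.
  unfold wave_wronskian, wronskian.
  rewrite cexpi_mode_freq_shift_PI, Hpsi_period, Hpsi'_period.
  transitivity ((floquet_sign n * floquet_sign n) * (cexpi (mode_freq n j * x0) * psi' x0
       - Ci * RtoC (mode_freq n j) * cexpi (mode_freq n j * x0) * psi x0))%C; [ring|].
  rewrite floquet_sign_sq; ring.
Qed.

Lemma wave_primitive_shift_PI (j : nat) : wave_primitive j (x0 + PI) = wave_primitive j x0.
Proof.
  induction j as [|j IH]; [reflexivity|]; simpl.
  rewrite wave_wronskian_shift_PI, IH; reflexivity.
Qed.

Lemma secular_jump (N : nat) :
  (secular_invariant N (x0 + PI) - secular_invariant N x0)%C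
  = (RtoC PI * trunc_wronskian N x0)%C.
Proof.
  unfold secular_invariant, trunc_primitive, secular_wronskian, trunc_wronskian, wronskian.
  rewrite (sum_n_ext_C _ (fun k => RtoC (floquet_coef K n k) * (Ci * RtoC (freq n k))
                                   * wave_primitive (k + n) x0)%C)
    by (intros; rewrite wave_primitive_shift_PI; reflexivity).
  rewrite floquet_trunc_shift_PI, floquet_trunc1_shift_PI, Hpsi_period, Hpsi'_period.
  pose proof (floquet_sign_sq n) as Hs.
  generalize (floquet_trunc K n N x0) (floquet_trunc1 K n N x0) (psi x0) (psi' x0).
  intros f f1 p p1.
  transitivity ((floquet_sign n * floquet_sign n)
                  * (RtoC (x0 + PI) * f * p1 - (f + RtoC (x0 + PI) * f1) * p)
                - (RtoC x0 * f * p1 - (f + RtoC x0 * f1) * p))%C; [ring|].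
  rewrite Hs; ring_C_parts.
Qed.

End Period.

Lemma trunc_wronskian_jump_bound (x0 M : R) (N : nat) :
  (forall x, x0 <= x <= x0 + PI -> Cmod (psi x) <= M) ->
  Cmod (trunc_wronskian N (x0 + PI) - trunc_wronskian N x0)%C
  <= 2 * (M * (K * bessel_coef K n N) * PI).
Proof.
  intros HM; pose proof PI_RGT_0.
  replace (2 * (M * (K * bessel_coef K n N) * PI))
    with (2 * (M * (K * bessel_coef K n N) * (x0 + PI - x0))) by ring.
  eapply Cmod_MVT_bound; [lra | apply is_derive_trunc_wronskian |].
  intros x Hx; cbv beta.
  rewrite !Cmod_mult, Cmod_R, Cmod_cexpi, Rabs_mult, Rabs_floquet_coef, (Rabs_right K) by lra.
  rewrite Rmult_1_r; apply Rmult_le_compat_r; [left; apply Rmult_lt_0_compat; auto;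
    apply bessel_coef_pos; auto | auto].
Qed.

Lemma secular_invariant_jump_bound (x0 M : R) (N : nat) : 0 < x0 ->
  (forall x, x0 <= x <= x0 + PI -> Cmod (psi x) <= M) ->
  Cmod (secular_invariant N (x0 + PI) - secular_invariant N x0)%C
  <= 2 * (M * ((x0 + PI) * (K * bessel_coef K n N)) * PI).
Proof.
  intros Hx0 HM; pose proof PI_RGT_0; pose proof (bessel_coef_pos K n N HK).
  replace (2 * (M * ((x0 + PI) * (K * bessel_coef K n N)) * PI))
    with (2 * (M * ((x0 + PI) * (K * bessel_coef K n N)) * (x0 + PI - x0))) by ring.
  eapply Cmod_MVT_bound; [lra | apply is_derive_secular_invariant |].
  intros x Hx; cbv beta.
  rewrite !Cmod_mult, !Cmod_R, Cmod_cexpi, Rabs_mult, Rabs_floquet_coef, (Rabs_right K),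
    (Rabs_right x), Rmult_1_r by lra.
  assert (HKd : 0 < K * bessel_coef K n N) by (apply Rmult_lt_0_compat; auto).
  apply Rmult_le_compat; [apply Cmod_ge_0 | nra | apply HM; auto |].
  apply Rmult_le_compat_r; lra.
Qed.

Lemma trunc_wronskian_bound (x0 : R) (beta : C) : 0 < x0 ->
  (forall N, trunc_wronskian N (x0 + PI) = (beta * trunc_wronskian N x0)%C) ->
  (beta = RtoC 1 ->
   psi (x0 + PI) = (floquet_sign n * psi x0)%C /\ psi' (x0 + PI) = (floquet_sign n * psi' x0)%C) ->
  exists C, forall N, Cmod (trunc_wronskian N x0) <= C * bessel_coef K n N.
Proof.
  intros Hx0 Hbeta Hperiod; pose proof PI_RGT_0.
  destruct Hsol as [Hd _].
  destruct (Cmod_bounded_of_derive psi psi' x0 (x0 + PI) Hd) as [M HM].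
  destruct (Ceq_dec beta (RtoC 1)) as [E1 | N1].
  - destruct (Hperiod E1) as [Hp Hp'].
    exists (2 * M * (x0 + PI) * K); intros N.
    pose proof (secular_invariant_jump_bound x0 M N Hx0 HM) as Hb.
    rewrite (secular_jump x0 Hp Hp'), Cmod_mult, Cmod_R, Rabs_right in Hb by lra.
    apply Rmult_le_reg_l with PI; nra.
  - assert (Hgap : 0 < Cmod (beta - RtoC 1)%C)
      by (apply Cmod_gt_0; intros E; apply N1, Ceq_minus; auto).
    exists (2 * M * K * PI / Cmod (beta - RtoC 1)%C); intros N.
    pose proof (trunc_wronskian_jump_bound x0 M N HM) as Hb.
    replace (trunc_wronskian N (x0 + PI) - trunc_wronskian N x0)%C
      with ((beta - RtoC 1) * trunc_wronskian N x0)%C in Hb by (rewrite Hbeta; ring).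
    rewrite Cmod_mult in Hb.
    apply Rmult_le_reg_l with (Cmod (beta - RtoC 1)%C); auto.
    replace (Cmod (beta - RtoC 1) * (2 * M * K * PI / Cmod (beta - RtoC 1) * bessel_coef K n N))
      with (2 * (M * (K * bessel_coef K n N) * PI)) by (field; lra).
    exact Hb.
Qed.

End Wronskian.

Lemma bessel_coef_le (K : R) (n k : nat) : 0 < K -> bessel_coef K n k <= (K / 4) ^ k / INR (fact k).
Proof.
  intros HK; unfold bessel_coef, Rdiv; apply Rmult_le_compat_l; [apply pow_le; lra|].
  pose proof (INR_fact_lt_0 k); assert (1 <= INR (fact (k + n))).
  { apply (le_INR 1); pose proof (lt_O_fact (k + n)); lia. }
  apply Rinv_le_contravar; [apply INR_fact_lt_0 | nra].
Qed.

Lemma sum_bessel_coef_le (K : R) (n N : nat) : 0 < K -> sum_n (bessel_coef K n) N <= exp (K / 4).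
Proof.
  intros HK; eapply Rle_trans; [apply (sum_n_m_le _ (fun k => (K / 4) ^ k / INR (fact k)))|].
  - intros; apply bessel_coef_le; auto.
  - change (sum_n (fun k => (K / 4) ^ k / INR (fact k)) N <= exp (K / 4)).
    rewrite sum_n_Reals; apply exp_ge_taylor; lra.
Qed.

Lemma INR_le_pow2 (k : nat) : INR k <= 2 ^ k.
Proof.
  induction k as [|k IH]; [simpl; lra|].
  rewrite S_INR; simpl; assert (1 <= 2 ^ k) by (apply pow_R1_Rle; lra); lra.
Qed.

Lemma sum_bessel_coef_weighted_le (K : R) (n N : nat) : 0 < K ->
  sum_n (fun k => INR (2 * k) * bessel_coef K n k) N <= 2 * exp (K / 2).
Proof.
  intros HK; eapply Rle_trans; [apply (sum_n_m_le _ (fun k => 2 * ((K / 2) ^ k / INR (fact k))))|].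
  - intros k; pose proof (bessel_coef_le K n k HK); pose proof (bessel_coef_pos K n k HK).
    pose proof (INR_le_pow2 k).
    assert (0 <= (K / 4) ^ k / INR (fact k))
      by (apply Rdiv_le_0_compat; [apply pow_le; lra | apply INR_fact_lt_0]).
    replace ((K / 2) ^ k) with (2 ^ k * (K / 4) ^ k)
      by (rewrite <- Rpow_mult_distr; f_equal; field).
    rewrite mult_INR; simpl (INR 2); unfold Rdiv in *.
    pose proof (pos_INR k); nra.
  - change (sum_n (fun k => 2 * ((K / 2) ^ k / INR (fact k))) N <= 2 * exp (K / 2)).
    rewrite sum_n_mult_l_R, sum_n_Reals.
    apply Rmult_le_compat_l; [lra | apply exp_ge_taylor; lra].
Qed.

Lemma bessel_coef_eventually_small (K : R) (n : nat) (C delta : R) : 0 < K -> 0 < delta ->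
  exists N, C * bessel_coef K n (S N) < delta.
Proof.
  intros HK Hd; set (A := Rabs C + 1).
  assert (HA : 0 < A) by (unfold A; pose proof (Rabs_pos C); lra).
  destruct (cv_speed_pow_fact (K / 4) (delta / A)) as [N HN];
    [apply Rlt_gt, Rdiv_lt_0_compat; lra|].
  exists N; specialize (HN (S N) ltac:(lia)); unfold Rdist in HN; rewrite Rminus_0_r in HN.
  pose proof (bessel_coef_le K n (S N) HK); pose proof (bessel_coef_pos K n (S N) HK).
  assert (Hsmall : A * bessel_coef K n (S N) < delta).
  { apply Rmult_lt_reg_r with (/ A); [apply Rinv_0_lt_compat; lra|].
    replace (A * bessel_coef K n (S N) * / A) with (bessel_coef K n (S N)) by (field; lra).
    pose proof (Rle_abs ((K / 4) ^ S N / INR (fact (S N)))); unfold Rdiv in *; lra. }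
  pose proof (Rle_abs C); unfold A in Hsmall; nra.
Qed.

Lemma is_derive_pow_id (j : nat) (s : R) : is_derive (fun t : R => t ^ j) s (INR j * s ^ pred j).
Proof.
  replace (INR j * s ^ pred j) with (INR j * 1 * s ^ pred j) by ring.
  exact (is_derive_pow _ j s 1 (is_derive_id (K:=R_AbsRing) s)).
Qed.

Lemma pow_le_1 (s : R) (j : nat) : 0 <= s <= 1 -> s ^ j <= 1.
Proof. intros Hs; rewrite <- (pow1 j); apply pow_incr; lra. Qed.

Section BesselSeries.

Variables (K : R) (n : nat) (x0 : R).
Hypothesis HK : 0 < K.

Definition bessel_term (k : nat) : C := (RtoC (floquet_coef K n k) * cexpi (freq n k * x0))%C.

Lemma Cmod_bessel_term (k : nat) : Cmod (bessel_term k) = bessel_coef K n k.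
Proof.
  unfold bessel_term; rewrite Cmod_mult, Cmod_R, Rabs_floquet_coef, Cmod_cexpi by auto; ring.
Qed.

Lemma bessel_term_rec (k : nat) :
  (bessel_term (S k) * RtoC (4 * INR (S k) * INR (S k + n)) = - V K x0 * bessel_term k)%C.
Proof.
  unfold bessel_term, V; rewrite cexpi_freq_S.
  transitivity (RtoC (floquet_coef K n (S k) * (4 * INR (S k) * INR (S k + n)))
                * cexpi (freq n k * x0) * cexpi (2 * x0))%C.
  { generalize (cexpi (freq n k * x0)) (cexpi (2 * x0)); intros; ring_C_parts. }
  rewrite floquet_coef_rec.
  generalize (cexpi (freq n k * x0)) (cexpi (2 * x0)); intros; ring_C_parts.
Qed.

(* f = bessel_poly N has f(1) = floquet_trunc N x0 and bessel_flux N s = s^(2n+1) f'(s);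
   up to truncation, (s^(2n+1) f')' = - V(x0) s^(2n+1) f, Bessel's equation in s. *)
Definition bessel_poly (N : nat) (s : R) : C :=
  sum_n (fun k => bessel_term k * RtoC (s ^ (2 * k)))%C N.

Definition bessel_poly1 (N : nat) (s : R) : C :=
  sum_n (fun k => bessel_term k * RtoC (INR (2 * k) * s ^ pred (2 * k)))%C N.

Definition bessel_flux (N : nat) (s : R) : C :=
  sum_n (fun k => bessel_term k * RtoC (INR (2 * k) * s ^ (2 * k + 2 * n)))%C N.

Definition bessel_flux1 (N : nat) (s : R) : C :=
  sum_n (fun k => bessel_term k
                  * RtoC (INR (2 * k) * (INR (2 * k + 2 * n) * s ^ pred (2 * k + 2 * n))))%C N.

Lemma is_derive_bessel_poly (N : nat) (s : R) : is_derive (bessel_poly N) s (bessel_poly1 N s).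
Proof.
  apply (is_derive_sum_n_C (fun k t => bessel_term k * RtoC (t ^ (2 * k)))%C
    (fun k t => bessel_term k * RtoC (INR (2 * k) * t ^ pred (2 * k)))%C).
  intros k; apply is_derive_Cscal, is_derive_RtoC, is_derive_pow_id.
Qed.

Lemma is_derive_bessel_flux (N : nat) (s : R) : is_derive (bessel_flux N) s (bessel_flux1 N s).
Proof.
  apply (is_derive_sum_n_C (fun k t => bessel_term k * RtoC (INR (2 * k) * t ^ (2 * k + 2 * n)))%C
    (fun k t => bessel_term k
                * RtoC (INR (2 * k) * (INR (2 * k + 2 * n) * t ^ pred (2 * k + 2 * n))))%C).
  intros k; apply is_derive_Cscal, is_derive_RtoC, is_derive_scal, is_derive_pow_id.
Qed.

Lemma bessel_flux_eq (N : nat) (s : R) :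
  bessel_flux N s = (RtoC (s ^ (2 * n + 1)) * bessel_poly1 N s)%C.
Proof.
  unfold bessel_flux, bessel_poly1; rewrite <- sum_n_mult_l_C; apply sum_n_ext_C; intros [|k] _.
  - simpl; ring_C_parts.
  - replace (pred (2 * S k)) with (S (2 * k)) by lia.
    replace (2 * S k + 2 * n)%nat with ((2 * n + 1) + S (2 * k))%nat by lia.
    rewrite pow_add; generalize (bessel_term (S k)); intros; ring_C_parts.
Qed.

Lemma bessel_flux1_eq (N : nat) (s : R) :
  bessel_flux1 (S N) s = (- V K x0 * RtoC (s ^ (2 * n + 1)) * bessel_poly N s)%C.
Proof.
  assert (Hk : forall k, (bessel_term (S k)
      * RtoC (INR (2 * S k) * (INR (2 * S k + 2 * n) * s ^ pred (2 * S k + 2 * n)))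
      = - V K x0 * RtoC (s ^ (2 * n + 1)) * (bessel_term k * RtoC (s ^ (2 * k))))%C).
  { intros k.
    transitivity (bessel_term (S k) * RtoC (4 * INR (S k) * INR (S k + n))
                  * RtoC (s ^ (2 * n + 1) * s ^ (2 * k)))%C.
    { replace (pred (2 * S k + 2 * n)) with (2 * n + 1 + 2 * k)%nat by lia; rewrite pow_add.
      replace (INR (2 * S k) * (INR (2 * S k + 2 * n) * (s ^ (2 * n + 1) * s ^ (2 * k))))
        with (4 * INR (S k) * INR (S k + n) * (s ^ (2 * n + 1) * s ^ (2 * k)))
        by (rewrite !mult_INR, !plus_INR, !mult_INR; simpl; ring).
      generalize (bessel_term (S k)); intros; ring_C_parts. }
    rewrite bessel_term_rec; generalize (V K x0) (bessel_term k); intros; ring_C_parts. }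
  unfold bessel_flux1, bessel_poly; rewrite sum_n_shift_C; simpl (INR (2 * 0)).
  rewrite (sum_n_ext_C _ _ N (fun k _ => Hk k)), sum_n_mult_l_C.
  rewrite Rmult_0_l; ring.
Qed.

Lemma bessel_poly_S (N : nat) (s : R) :
  bessel_poly (S N) s = (bessel_poly N s + bessel_term (S N) * RtoC (s ^ (2 * S N)))%C.
Proof. apply sum_Sn_C. Qed.

Lemma Cmod_bessel_poly_le (N : nat) (s : R) : 0 <= s <= 1 -> Cmod (bessel_poly N s) <= exp (K / 4).
Proof.
  intros Hs; eapply Rle_trans; [apply Cmod_sum_n|].
  eapply Rle_trans; [|apply (sum_bessel_coef_le K n N HK)].
  apply sum_n_m_le; intros k.
  rewrite Cmod_mult, Cmod_bessel_term, Cmod_R, Rabs_right by (apply Rle_ge, pow_le; lra).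
  pose proof (bessel_coef_pos K n k HK); pose proof (pow_le_1 s (2 * k) Hs); nra.
Qed.

Lemma Cmod_bessel_poly_ge (N : nat) (s : R) : 0 <= s <= 1 ->
  bessel_coef K n 0 - s ^ 2 * exp (K / 4) <= Cmod (bessel_poly (S N) s).
Proof.
  intros Hs; unfold bessel_poly; rewrite sum_n_shift_C.
  assert (Htail : Cmod (sum_n (fun k => bessel_term (S k) * RtoC (s ^ (2 * S k)))%C N)
                  <= s ^ 2 * exp (K / 4)).
  { eapply Rle_trans; [apply Cmod_sum_n|].
    eapply Rle_trans; [apply (sum_n_m_le _ (fun k => s ^ 2 * bessel_coef K n (S k)))|].
    - intros k; rewrite Cmod_mult, Cmod_bessel_term, Cmod_R, Rabs_right
        by (apply Rle_ge, pow_le; lra).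
      replace (2 * S k)%nat with (2 + 2 * k)%nat by lia; rewrite pow_add.
      pose proof (pow_le_1 s (2 * k) Hs); pose proof (pow_le s (2 * k) (proj1 Hs)).
      pose proof (pow2_ge_0 s); pose proof (bessel_coef_pos K n (S k) HK).
      apply Rle_trans with (bessel_coef K n (S k) * (s ^ 2 * 1)); [|lra].
      apply Rmult_le_compat_l; [lra | apply Rmult_le_compat_l; lra].
    - change (sum_n (fun k => s ^ 2 * bessel_coef K n (S k)) N <= s ^ 2 * exp (K / 4)).
      rewrite sum_n_mult_l_R; apply Rmult_le_compat_l; [apply pow2_ge_0|].
      pose proof (sum_bessel_coef_le K n (S N) HK) as Hsum.
      rewrite sum_n_shift_R in Hsum; pose proof (bessel_coef_pos K n 0 HK); lra. }
  set (tail := sum_n (fun k => bessel_term (S k) * RtoC (s ^ (2 * S k)))%C N) in *.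
  pose proof (Cmod_triangle (bessel_term 0 * RtoC (s ^ (2 * 0)) + tail)%C (- tail)%C) as Htri.
  replace (bessel_term 0 * RtoC (s ^ (2 * 0)) + tail + - tail)%C with (bessel_term 0) in Htri
    by (simpl; generalize (bessel_term 0); intros; ring_C_parts).
  rewrite Cmod_opp, Cmod_bessel_term in Htri; lra.
Qed.

Lemma bessel_poly_1 (N : nat) : bessel_poly N 1 = floquet_trunc K n N x0.
Proof.
  unfold bessel_poly, floquet_trunc; apply sum_n_ext_C; intros k _.
  rewrite pow1; unfold bessel_term; ring.
Qed.

Lemma bessel_flux_1 (N : nat) :
  (Ci * (bessel_flux N 1 + RtoC (INR n) * bessel_poly N 1))%C = floquet_trunc1 K n N x0.
Proof.
  unfold bessel_flux, bessel_poly, floquet_trunc1.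
  rewrite <- sum_n_mult_l_C, <- sum_n_plus_C, <- sum_n_mult_l_C.
  apply sum_n_ext_C; intros k _; rewrite !pow1; unfold bessel_term, freq; rewrite plus_INR.
  generalize (cexpi (INR (2 * k + n) * x0)); intros; ring_C_parts.
Qed.

Lemma Cmod_bessel_flux_1 (N : nat) : Cmod (bessel_flux N 1) <= 2 * exp (K / 2).
Proof.
  eapply Rle_trans; [apply Cmod_sum_n|].
  eapply Rle_trans; [|apply (sum_bessel_coef_weighted_le K n N HK)].
  apply sum_n_m_le; intros k.
  rewrite Cmod_mult, Cmod_bessel_term, Cmod_R, pow1, Rmult_1_r, Rabs_right
    by (apply Rle_ge, pos_INR); lra.
Qed.

Definition bessel_energy (N : nat) (s : R) : C := (bessel_flux N s * Cconj (bessel_poly N s))%C.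

Definition bessel_energy1 (N : nat) (s : R) : C :=
  (bessel_flux1 N s * Cconj (bessel_poly N s) + bessel_flux N s * Cconj (bessel_poly1 N s))%C.

Lemma is_derive_bessel_energy (N : nat) (s : R) :
  is_derive (bessel_energy N) s (bessel_energy1 N s).
Proof.
  apply is_derive_Cmult;
    [apply is_derive_bessel_flux | apply is_derive_Cconj, is_derive_bessel_poly].
Qed.

Definition energy_error (N : nat) (s : R) : C :=
  (V K x0 * (bessel_term (S N) * RtoC (s ^ (2 * S N))) * Cconj (bessel_poly (S N) s))%C.

(* Since [bessel_flux * conj bessel_poly1] is real, only the Bessel equation contributes. *)
Lemma energy_rate_eq (N : nat) (s : R) :
  snd (V K x0) * snd (bessel_energy1 (S N) s)
  = s ^ (2 * n + 1) * (- snd (V K x0) ^ 2 * Cmod (bessel_poly (S N) s) ^ 2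
                       + snd (V K x0) * snd (energy_error N s)).
Proof.
  unfold bessel_energy1, energy_error; rewrite bessel_flux1_eq, bessel_flux_eq, Cmod2_alt.
  rewrite bessel_poly_S.
  generalize (V K x0) (bessel_poly N s) (bessel_term (S N)) (bessel_poly1 (S N) s); intros.
  unfold Re, Im, Cconj, Cminus, Cplus, Cmult, Copp, RtoC; cbn [fst snd]; ring.
Qed.

Lemma energy_error_le (N : nat) (s : R) : 0 <= s <= 1 ->
  snd (V K x0) * snd (energy_error N s)
  <= Rabs (snd (V K x0)) * (K * bessel_coef K n (S N) * exp (K / 4)).
Proof.
  intros Hs; eapply Rle_trans; [apply Rle_abs|]; rewrite Rabs_mult.
  apply Rmult_le_compat_l; [apply Rabs_pos|].
  eapply Rle_trans; [apply im_le_Cmod|]; unfold energy_error.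
  rewrite !Cmod_mult, Cmod_conj, Cmod_bessel_term, Cmod_R.
  assert (HV : Cmod (V K x0) = K)
    by (unfold V; rewrite Cmod_mult, Cmod_R, Cmod_cexpi, Rabs_right by lra; ring).
  rewrite HV, Rabs_right by (apply Rle_ge, pow_le; lra).
  pose proof (Cmod_bessel_poly_le (S N) s Hs); pose proof (Cmod_ge_0 (bessel_poly (S N) s)).
  pose proof (bessel_coef_pos K n (S N) HK); pose proof (pow_le_1 s (2 * S N) Hs).
  pose proof (pow_le s (2 * S N) (proj1 Hs)).
  assert (HKd : 0 < K * bessel_coef K n (S N)) by (apply Rmult_lt_0_compat; lra).
  rewrite <- Rmult_assoc; apply Rmult_le_compat; [nra | lra | | lra].
  rewrite <- (Rmult_1_r (K * bessel_coef K n (S N))) at 2; apply Rmult_le_compat_l; lra.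
Qed.

Definition gap_radius : R := bessel_coef K n 0 / (bessel_coef K n 0 + 2 * exp (K / 4)).

Definition energy_gap : R :=
  (gap_radius / 2) ^ (2 * n + 1) * snd (V K x0) ^ 2 * (bessel_coef K n 0 / 2) ^ 2.

Lemma gap_radius_spec :
  0 < gap_radius <= 1 /\ gap_radius ^ 2 * exp (K / 4) <= bessel_coef K n 0 / 2.
Proof.
  pose proof (bessel_coef_pos K n 0 HK); pose proof (exp_pos (K / 4)).
  assert (Hr : gap_radius * (bessel_coef K n 0 + 2 * exp (K / 4)) = bessel_coef K n 0)
    by (unfold gap_radius; field; lra).
  assert (0 < gap_radius) by (apply Rdiv_lt_0_compat; lra).
  assert (gap_radius <= 1) by nra.
  split; [lra | simpl; nra].
Qed.

Lemma energy_rate_le (N : nat) (s : R) : 0 <= s <= 1 ->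
  snd (V K x0) * snd (bessel_energy1 (S N) s)
  <= Rabs (snd (V K x0)) * (K * bessel_coef K n (S N) * exp (K / 4))
     - s ^ (2 * n + 1) * (snd (V K x0) ^ 2 * Cmod (bessel_poly (S N) s) ^ 2).
Proof.
  intros Hs; rewrite energy_rate_eq.
  pose proof (energy_error_le N s Hs) as Herr.
  pose proof (pow_le s (2 * n + 1) (proj1 Hs)); pose proof (pow_le_1 s (2 * n + 1) Hs).
  pose proof (Rabs_pos (snd (V K x0))); pose proof (bessel_coef_pos K n (S N) HK).
  pose proof (exp_pos (K / 4)).
  assert (0 <= Rabs (snd (V K x0)) * (K * bessel_coef K n (S N) * exp (K / 4))).
  { apply Rmult_le_pos; [lra|]; apply Rmult_le_pos; [|lra]; apply Rmult_le_pos; lra. }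
  destruct (Rle_dec 0 (snd (V K x0) * snd (energy_error N s))); nra.
Qed.

Lemma energy_rate_gap (N : nat) (s : R) : gap_radius / 2 <= s <= gap_radius ->
  energy_gap <= s ^ (2 * n + 1) * (snd (V K x0) ^ 2 * Cmod (bessel_poly (S N) s) ^ 2).
Proof.
  intros Hs; destruct gap_radius_spec as [Hr Hr2].
  pose proof (Cmod_bessel_poly_ge N s ltac:(lra)).
  assert (s ^ 2 <= gap_radius ^ 2) by (apply pow_incr; lra).
  pose proof (exp_pos (K / 4)); pose proof (bessel_coef_pos K n 0 HK).
  assert ((bessel_coef K n 0 / 2) ^ 2 <= Cmod (bessel_poly (S N) s) ^ 2)
    by (apply pow_incr; nra).
  assert ((gap_radius / 2) ^ (2 * n + 1) <= s ^ (2 * n + 1)) by (apply pow_incr; lra).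
  pose proof (pow_le (gap_radius / 2) (2 * n + 1) ltac:(lra)).
  pose proof (pow2_ge_0 (snd (V K x0))).
  unfold energy_gap; rewrite Rmult_assoc.
  apply Rmult_le_compat; [lra | apply Rmult_le_pos; [lra | apply pow2_ge_0] | lra |].
  apply Rmult_le_compat_l; lra.
Qed.

Lemma energy_growth_bound (N : nat) :
  snd (V K x0) * snd (bessel_energy (S N) 1)
  <= Rabs (snd (V K x0)) * (K * bessel_coef K n (S N) * exp (K / 4))
     - energy_gap * (gap_radius / 2).
Proof.
  set (v := snd (V K x0)); set (eps := Rabs v * (K * bessel_coef K n (S N) * exp (K / 4))).
  set (h := fun s => v * snd (bessel_energy (S N) s)).
  set (h' := fun s => v * snd (bessel_energy1 (S N) s)).
  assert (Hd : forall s, is_derive h s (h' s)).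
  { intros s; apply is_derive_scal.
    exact (proj2 (proj1 (is_derive_C_iff _ _ _) (is_derive_bessel_energy (S N) s))). }
  destruct gap_radius_spec as [Hr _].
  assert (Hle : forall s, 0 <= s <= 1 -> h' s <= eps).
  { intros s Hs; pose proof (energy_rate_le N s Hs).
    pose proof (pow_le s (2 * n + 1) (proj1 Hs)); pose proof (pow2_ge_0 v);
    pose proof (pow2_ge_0 (Cmod (bessel_poly (S N) s))).
    assert (0 <= s ^ (2 * n + 1) * (v ^ 2 * Cmod (bessel_poly (S N) s) ^ 2))
      by (apply Rmult_le_pos; [|apply Rmult_le_pos]; lra).
    unfold h', eps, v in *; lra. }
  assert (Hgap : forall s, gap_radius / 2 <= s <= gap_radius -> h' s <= eps - energy_gap).
  { intros s Hs; pose proof (energy_rate_le N s ltac:(lra)); pose proof (energy_rate_gap N s Hs).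
    unfold h', eps, v in *; lra. }
  pose proof (MVT_upper_bound h h' 0 (gap_radius / 2) eps ltac:(lra) Hd
                ltac:(intros; apply Hle; lra)).
  pose proof (MVT_upper_bound h h' (gap_radius / 2) gap_radius (eps - energy_gap)
                ltac:(lra) Hd Hgap).
  pose proof (MVT_upper_bound h h' gap_radius 1 eps ltac:(lra) Hd ltac:(intros; apply Hle; lra)).
  assert (Hh0 : h 0 = 0).
  { unfold h, bessel_energy; rewrite bessel_flux_eq, pow_i by lia; simpl; ring. }
  change (h 1 <= eps - energy_gap * (gap_radius / 2)); lra.
Qed.

Lemma bessel_energy_not_small (C : R) : snd (V K x0) <> 0 ->
  ~ (forall N, Rabs (snd (bessel_energy (S N) 1)) <= C * bessel_coef K n (S N)).
Proof.
  intros Hv HC; set (v := snd (V K x0)) in *.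
  destruct gap_radius_spec as [Hr _].
  assert (Hgap : 0 < energy_gap * (gap_radius / 2)).
  { unfold energy_gap; fold v; pose proof (bessel_coef_pos K n 0 HK).
    apply Rmult_lt_0_compat; [|lra]; apply Rmult_lt_0_compat; [apply Rmult_lt_0_compat|];
      [apply pow_lt; lra | apply pow2_gt_0; auto | apply pow2_gt_0; lra]. }
  destruct (bessel_coef_eventually_small K n (Rabs v * (K * exp (K / 4) + C)) _ HK Hgap) as [N HN].
  pose proof (energy_growth_bound N) as Hgrow; fold v in Hgrow.
  pose proof (HC N) as HCN.
  assert (- (Rabs v * (C * bessel_coef K n (S N))) <= v * snd (bessel_energy (S N) 1)).
  { pose proof (Rle_abs (- (v * snd (bessel_energy (S N) 1)))) as Habs.
    rewrite Rabs_Ropp, Rabs_mult in Habs.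
    pose proof (Rmult_le_compat_l _ _ _ (Rabs_pos v) HCN); lra. }
  nra.
Qed.

End BesselSeries.

Lemma dirichlet_trunc_bound (K : R) (n : nat) (x0 : R) (psi psi' psi'' : R -> C) :
  0 < K -> 0 < x0 -> is_s_solution K (lam n) x0 psi psi' psi'' -> psi (x0 + PI) = RtoC 0 ->
  exists C, forall N, Cmod (floquet_trunc K n N x0) <= C * bessel_coef K n N.
Proof.
  intros HK Hx0 [Hsol [Hpsi Hpsi']] Hend.
  assert (HW : forall N, trunc_wronskian K n psi psi' N x0 = floquet_trunc K n N x0)
    by (intros; unfold trunc_wronskian, wronskian; rewrite Hpsi, Hpsi'; ring).
  destruct (trunc_wronskian_bound K n psi psi' psi'' HK Hsol x0
              (floquet_sign n * psi' (x0 + PI)%R)%C Hx0) as [C HC].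
  - intros N; unfold trunc_wronskian, wronskian.
    rewrite floquet_trunc_shift_PI, floquet_trunc1_shift_PI, Hpsi, Hpsi', Hend; ring.
  - intros Hbeta; rewrite Hpsi, Hpsi', Hend; split; [ring|].
    transitivity (floquet_sign n * (floquet_sign n * psi' (x0 + PI)%R))%C;
      [rewrite Cmult_assoc, floquet_sign_sq; ring | rewrite Hbeta; ring].
  - exists C; intros N; rewrite <- HW; apply HC.
Qed.

Lemma neumann_trunc_bound (K : R) (n : nat) (x0 : R) (psi psi' psi'' : R -> C) :
  0 < K -> 0 < x0 -> is_c_solution K (lam n) x0 psi psi' psi'' -> psi' (x0 + PI) = RtoC 0 ->
  exists C, forall N, Cmod (floquet_trunc1 K n N x0) <= C * bessel_coef K n N.
Proof.
  intros HK Hx0 [Hsol [Hpsi Hpsi']] Hend.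
  assert (HW : forall N, trunc_wronskian K n psi psi' N x0 = (- floquet_trunc1 K n N x0)%C)
    by (intros; unfold trunc_wronskian, wronskian; rewrite Hpsi, Hpsi'; ring).
  destruct (trunc_wronskian_bound K n psi psi' psi'' HK Hsol x0
              (floquet_sign n * psi (x0 + PI)%R)%C Hx0) as [C HC].
  - intros N; unfold trunc_wronskian, wronskian.
    rewrite floquet_trunc_shift_PI, floquet_trunc1_shift_PI, Hpsi, Hpsi', Hend; ring.
  - intros Hbeta; rewrite Hpsi, Hpsi', Hend; split; [|ring].
    transitivity (floquet_sign n * (floquet_sign n * psi (x0 + PI)%R))%C;
      [rewrite Cmult_assoc, floquet_sign_sq; ring | rewrite Hbeta; ring].
  - exists C; intros N; rewrite <- Cmod_opp, <- HW; apply HC.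
Qed.

Lemma bessel_term_at_half_PI (K : R) (n : nat) (x0 : R) (k : nat) : 0 < x0 < PI -> cos x0 = 0 ->
  bessel_term K n x0 k = (RtoC (bessel_coef K n k) * Cpow Ci n)%C.
Proof.
  intros Hx0 Hc.
  assert (Hs : sin x0 = 1).
  { pose proof (sin_gt_0 x0 (proj1 Hx0) (proj2 Hx0)); pose proof (sin2_cos2 x0).
    unfold Rsqr in *; rewrite Hc in *; nra. }
  assert (Hi : cexpi x0 = Ci) by (unfold cexpi; rewrite Hc, Hs; reflexivity).
  unfold bessel_term, floquet_coef, freq.
  rewrite cexpi_INR_mul, Hi, Cpow_add_r, Cpow_mult_r.
  replace (Cpow Ci 2) with (RtoC (-1)) by (simpl; ring_C_parts).
  rewrite <- RtoC_pow; generalize (Cpow Ci n); intros z.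
  transitivity (RtoC ((-1) ^ k * (-1) ^ k * bessel_coef K n k) * z)%C; [ring_C_parts|].
  rewrite sign_sq, Rmult_1_l; reflexivity.
Qed.

Lemma Im_V_neq_0 (K x0 : R) : 0 < K -> 0 < x0 < PI -> cos x0 <> 0 -> snd (V K x0) <> 0.
Proof.
  intros HK Hx0 Hc; unfold V, cexpi; simpl; rewrite sin_2a.
  pose proof (sin_gt_0 x0 (proj1 Hx0) (proj2 Hx0)).
  intros E; apply Hc.
  assert (E' : K * sin x0 * (2 * cos x0) = 0) by lra.
  apply Rmult_integral in E' as [E' | E']; [apply Rmult_integral in E' as [|]; lra | lra].
Qed.

Lemma floquet_trunc_not_small (K : R) (n : nat) (x0 : R) : 0 < K -> 0 < x0 < PI ->
  ~ (exists C, forall N, Cmod (floquet_trunc K n N x0) <= C * bessel_coef K n N).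
Proof.
  intros HK Hx0 [C HC]; pose proof (fun k => bessel_coef_pos K n k HK) as Hpos.
  destruct (Req_dec (cos x0) 0) as [Hc | Hc].
  - destruct (bessel_coef_eventually_small K n C (bessel_coef K n 0) HK (Hpos 0%nat)) as [N HN].
    specialize (HC (S N)); rewrite <- bessel_poly_1 in HC; unfold bessel_poly in HC.
    rewrite (sum_n_ext_C _ (fun k => Cpow Ci n * RtoC (bessel_coef K n k))%C) in HC
      by (intros k _; rewrite pow1, bessel_term_at_half_PI by auto; ring).
    rewrite sum_n_mult_l_C, sum_n_RtoC, Cmod_mult, Cmod_pow, Cmod_Ci, pow1, Cmod_R in HC.
    pose proof (sum_n_ge_first (bessel_coef K n) (S N) (fun k => Rlt_le _ _ (Hpos k))).
    pose proof (Hpos 0%nat); rewrite Rabs_right in HC by lra; lra.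
  - apply (bessel_energy_not_small K n x0 HK (2 * exp (K / 2) * C) (Im_V_neq_0 K x0 HK Hx0 Hc)).
    intros N; eapply Rle_trans; [apply im_le_Cmod|].
    unfold bessel_energy; rewrite Cmod_mult, Cmod_conj, bessel_poly_1, Rmult_assoc.
    apply Rmult_le_compat;
      [apply Cmod_ge_0 | apply Cmod_ge_0 | apply Cmod_bessel_flux_1 | apply HC].
    exact HK.
Qed.

Lemma floquet_trunc1_not_small (K : R) (n : nat) (x0 : R) : 0 < K -> 0 < x0 < PI ->
  ~ (exists C, forall N, Cmod (floquet_trunc1 K n N x0) <= C * bessel_coef K n N).
Proof.
  intros HK Hx0 [C HC]; pose proof (fun k => bessel_coef_pos K n k HK) as Hpos.
  assert (Hw : forall k, 0 <= freq n k * bessel_coef K n k)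
    by (intros; apply Rmult_le_pos; [apply pos_INR | apply Rlt_le, Hpos]).
  destruct (Req_dec (cos x0) 0) as [Hc | Hc].
  - assert (H1 : 0 < freq n 1 * bessel_coef K n 1)
      by (apply Rmult_lt_0_compat; [apply lt_0_INR; lia | apply Hpos]).
    destruct (bessel_coef_eventually_small K n C _ HK H1) as [N HN].
    specialize (HC (S N)); unfold floquet_trunc1 in HC.
    rewrite (sum_n_ext_C _ (fun k => Ci * Cpow Ci n * RtoC (freq n k * bessel_coef K n k))%C) in HC.
    2:{ intros k _.
        transitivity (bessel_term K n x0 k * (Ci * RtoC (freq n k)))%C; [unfold bessel_term; ring|].
        rewrite bessel_term_at_half_PI by auto; generalize (Cpow Ci n); intros; ring_C_parts. }
    rewrite sum_n_mult_l_C, sum_n_RtoC, !Cmod_mult, Cmod_pow, Cmod_Ci, pow1, Cmod_R in HC.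
    rewrite sum_n_shift_R in HC.
    pose proof (sum_n_ge_first (fun k => freq n (S k) * bessel_coef K n (S k)) N
                  (fun k => Hw (S k))).
    pose proof (Hw 0%nat); pose proof (Hw 1%nat); rewrite Rabs_right in HC by lra; lra.
  - apply (bessel_energy_not_small K n x0 HK (C * exp (K / 4)) (Im_V_neq_0 K x0 HK Hx0 Hc)).
    intros N.
    replace (snd (bessel_energy K n x0 (S N) 1))
      with (snd ((bessel_flux K n x0 (S N) 1 + RtoC (INR n) * bessel_poly K n x0 (S N) 1)
                 * Cconj (bessel_poly K n x0 (S N) 1))%C)
      by (unfold bessel_energy;
          generalize (bessel_flux K n x0 (S N) 1) (bessel_poly K n x0 (S N) 1);
          intros; simpl; ring).
    eapply Rle_trans; [apply im_le_Cmod|].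
    rewrite Cmod_mult, Cmod_conj.
    replace (Cmod (bessel_flux K n x0 (S N) 1 + RtoC (INR n) * bessel_poly K n x0 (S N) 1)%C)
      with (Cmod (floquet_trunc1 K n (S N) x0))
      by (rewrite <- bessel_flux_1, Cmod_mult, Cmod_Ci; ring).
    replace (C * exp (K / 4) * bessel_coef K n (S N)) with (C * bessel_coef K n (S N) * exp (K / 4))
      by ring.
    apply Rmult_le_compat; [apply Cmod_ge_0 | apply Cmod_ge_0 | apply HC |].
    apply Cmod_bessel_poly_le; auto; lra.
Qed.

Theorem theorem6p7 (K : R) (HK : 0 < K) (x0 : R) (Hx0 : 0 < x0 < PI) (m : nat) :
  ~ dirichlet_eigenvalue K x0 (E m) /\ ~ neumann_eigenvalue K x0 (E m).
Proof.
  change (E m) with (lam (S m / 2)); split.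
  - intros [psi [psi' [psi'' [Hs Hend]]]].
    exact (floquet_trunc_not_small K _ x0 HK Hx0
             (dirichlet_trunc_bound K _ x0 psi psi' psi'' HK (proj1 Hx0) Hs Hend)).
  - intros [psi [psi' [psi'' [Hc Hend]]]].
    exact (floquet_trunc1_not_small K _ x0 HK Hx0
             (neumann_trunc_bound K _ x0 psi psi' psi'' HK (proj1 Hx0) Hc Hend)).
Qed.
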